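(* Let $A=[a_{ij}]\in\{0,1\}^{N\times N}$ be the adjacency matrix of a static contact graph on nodes $\{1,\dots,N\}$ (with $a_{ii}=0$), and let $\beta_0>0$, $\delta>0$, $\kappa>0$ and $0\le\beta_a<\beta_0$. Let $(p_i(t),q_i(t))_{i=1}^N$ solve the SAIS system \[ \dot p_i=\beta_0(1-p_i-q_i)\sum_{j=1}^N a_{ij}p_j+\beta_a q_i\sum_{j=1}^N a_{ij}p_j-\delta p_i,\qquad \dot q_i=\kappa(1-p_i-q_i)\sum_{j=1}^N a_{ij}p_j-\beta_a q_i\sum_{j=1}^N a_{ij}p_j, \] for $i\in\{1,\dots,N\}$, with initial data at time $t_0$ that are probabilities ($p_i(t_0),q_i(t_0)\ge 0$, $p_i(t_0)+q_i(t_0)\le 1$), and let $(p_i'(t))_{i=1}^N$ solve the SIS (N-intertwined) system \[ \dot p_i'=\beta_0(1-p_i')\sum_{j=1}^N a_{ij}p_j'-\delta p_i',\qquad i\in\{1,\dots,N\}, \] with the same initial conditions $p_i'(t_0)=p_i(t_0)$ for all $i$. Then $p_i(t)\le p_i'(t)$ for all $i\in\{1,\dots,N\}$ and all $t\in[t_0,\infty)$.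
   Context: $p_i$ and $q_i$ are the (mean-field) probabilities that individual $i$ is infected and alert, respectively; $1-p_i-q_i$ is the probability it is susceptible. $a_{ij}=1$ if individual $j$ is a neighbor of individual $i$ (i.e. $i$ can be directly infected by $j$), and $a_{ij}=0$ otherwise. $\beta_0$ is the infection rate of a susceptible individual, $\beta_a$ the infection rate of an alert individual, $\kappa$ the alerting rate, $\delta$ the curing rate. *)

From HB Require Import structures.
From mathcomp Require Import all_boot all_order all_algebra.
From mathcomp Require Import all_classical all_reals all_analysis.
Set Implicit Arguments. Unset Strict Implicit. Unset Printing Implicit Defensive.
Import Order.TTheory GRing.Theory Num.Theory.
Import numFieldNormedType.Exports.
Local Open Scope ring_scope.

Definition pressure (R : realType) (N : nat) (A : 'M[R]_N)
  (p : 'I_N -> R -> R) (i : 'I_N) (t : R) : R :=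
  \sum_(j < N) A i j * p j t.

Definition sais_p_rhs (R : realType) (N : nat) (A : 'M[R]_N)
  (beta0 betaa delta : R) (p q : 'I_N -> R -> R) (i : 'I_N) (t : R) : R :=
  beta0 * (1 - p i t - q i t) * pressure A p i t
  + betaa * q i t * pressure A p i t - delta * p i t.

Definition sais_q_rhs (R : realType) (N : nat) (A : 'M[R]_N)
  (betaa kappa : R) (p q : 'I_N -> R -> R) (i : 'I_N) (t : R) : R :=
  kappa * (1 - p i t - q i t) * pressure A p i t
  - betaa * q i t * pressure A p i t.

Definition sis_rhs (R : realType) (N : nat) (A : 'M[R]_N)
  (beta0 delta : R) (p : 'I_N -> R -> R) (i : 'I_N) (t : R) : R :=
  beta0 * (1 - p i t) * pressure A p i t - delta * p i t.

From HB Require Import structures.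
From mathcomp Require Import all_boot all_order all_algebra.
From mathcomp Require Import all_classical all_reals all_analysis.
From mathcomp Require Import lra.
Set Implicit Arguments. Unset Strict Implicit. Unset Printing Implicit Defensive.
Import Order.TTheory GRing.Theory Num.Theory.
Import numFieldNormedType.Exports.
Local Open Scope ring_scope.
Local Open Scope classical_set_scope.

(* Everything follows from one invariance principle ([nonneg_invariant]): a finite
   family of functions that starts nonnegative stays nonnegative provided, whenever
   some member has just reached [-e] while all members are [>= -e], its derivative is
   at least [-L e].  Adding [e exp((L + 1) (t - t0))] makes the derivative strictly
   positive at a first zero, which a first-exit-time argument rules out.  Applied to
   [(p, q, 1 - p - q)] and to [(p', 1 - p')] it shows that both systems stay in the
   probability simplex; applied to [p' - p] it gives the comparison, because the
   difference of the right-hand sides at a point where [p'_i - p_i = -e] is at least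
   [-beta0 N e]. *)

Lemma is_derive_cvg (R : realType) (g : R -> R) (s d : R) :
  is_derive s 1 g d -> g x @[x --> s] --> g s.
Proof. by move=> [dg _]; apply/differentiable_continuous/derivable1_diffP. Qed.

Lemma ball_itvP (R : realFieldType) (a e x : R) : ball a e x <-> a - e < x < a + e.
Proof. by rewrite ball_itv /= in_itv. Qed.

Lemma exists_left_point (R : realFieldType) (a s e : R) :
  a < s -> 0 < e -> exists x, [/\ a < x, s - e < x & x < s].
Proof.
move=> a_s e0; pose m := Num.min e (s - a).
have m_e : m <= e by rewrite ge_min lexx.
have m_sa : m <= s - a by rewrite ge_min lexx orbT.
have m0 : 0 < m by rewrite lt_min e0 /=; lra.
by exists (s - m / 2); split; lra.
Qed.

Lemma is_derive_gt0_left (R : realType) (g : R -> R) (s d : R) :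
  is_derive s 1 g d -> 0 < d ->
  exists2 e, 0 < e & forall x, s - e < x < s -> g x < g s.
Proof.
move=> [dg dval] d0.
have quot_gt0 : \forall h \near 0^', 0 < h^-1 *: ((g \o shift s) (h *: 1) - g s).
  by apply: cvgr_gt d0; rewrite -dval; exact: dg.
move: quot_gt0; rewrite near_withinE => /nbhs_ballP [e /= e0 He].
exists e => // x /andP[x1 x2].
have /He : ball (0 : R) e (x - s) by apply/ball_itvP; lra.
rewrite subr_eq0 => /(_ (negbT (lt_eqF x2))).
rewrite [_%:A]mulr1 subrK /GRing.scale /= => q_gt0.
have : (x - s) * ((x - s)^-1 * (g x - g s)) < 0 by rewrite nmulr_rlt0 // subr_lt0.
by rewrite mulrA mulfV ?mul1r ?subr_lt0 // lt_eqF ?subr_lt0.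
Qed.

Lemma first_exit_time (R : realType) (I : finType) (g : I -> R -> R) (t0 t : R)
    (j : I) :
  (forall k, 0 < g k t0) ->
  (forall k, g k x @[x --> t0^'+] --> g k t0) ->
  (forall k s, t0 < s -> g k x @[x --> s] --> g k s) ->
  t0 <= t -> g j t <= 0 ->
  exists s k, [/\ t0 < s <= t, g k s = 0, forall l, 0 <= g l s
                & forall l x, t0 <= x < s -> 0 < g l x].
Proof.
move=> g0 g_right g_cont t0t gjt.
pose S := [set x | t0 <= x /\ exists k, g k x <= 0].
have St : S t by split; last exists j.
have Slb : has_lbound S by exists t0 => y [].
pose s := inf S.
have s_le y : S y -> s <= y := @ge_inf _ _ Slb y.
have before l x : t0 <= x < s -> 0 < g l x.
  move=> /andP[x1 x2]; rewrite ltNge; apply/negP => glx.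
  by have := s_le x (conj x1 (ex_intro _ l glx)); lra.
have t0s : t0 < s.
  have : \forall x \near t0^'+, forall k, 0 < g k x.
    by apply: filter_forall => k; exact: cvgr_gt (g_right k) _ (g0 k).
  rewrite near_withinE => /nbhs_ballP [e /= e0 He].
  suff : t0 + e / 2 <= s by lra.
  apply: lb_le_inf; first by exists t.
  move=> y [y1 [k gky]]; rewrite leNgt; apply/negP => ye.
  move: y1; rewrite le_eqVlt => /orP[/eqP y_t0|y1]; first by have := g0 k; rewrite y_t0; lra.
  have /He/(_ y1 k) : ball t0 e y by apply/ball_itvP; lra.
  lra.
have gs_ge0 l : 0 <= g l s.
  rewrite leNgt; apply/negP => gls.
  have /nbhs_ballP [e /= e0 He] : \forall x \near s, g l x < 0.
    exact: cvgr_lt (g_cont l s t0s) _ gls.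
  have [x [x1 x2 x3]] := exists_left_point t0s e0.
  have := before l x; have := He x; rewrite ball_itvP; lra.
have [k gks] : exists k, g k s <= 0.
  apply: contrapT => none.
  have all_pos k : 0 < g k s by rewrite ltNge; apply/negP => gks; apply: none; exists k.
  have : \forall x \near s, forall k, 0 < g k x.
    apply: (filter_forall (nbhs_filter s)) => k.
    exact: cvgr_gt (g_cont k s t0s) _ (all_pos k).
  move=> /nbhs_ballP [e /= e0 He].
  have [y [y1 [l gly]] ys] := inf_adherent e0 (conj (ex_intro _ t St) Slb).
  have := s_le y (conj y1 (ex_intro _ l gly)); have := He y _ l; rewrite ball_itvP -/s.
  lra.
exists s, k; split => //; last by apply/le_anti; rewrite gks gs_ge0.
by rewrite t0s s_le.
Qed.

Lemma positivity_invariant (R : realType) (I : finType) (g dg : I -> R -> R) (t0 T : R) :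
  (forall k, 0 < g k t0) ->
  (forall k, g k x @[x --> t0^'+] --> g k t0) ->
  (forall k t, t0 < t -> is_derive t 1 (g k) (dg k t)) ->
  (forall k t, t0 < t <= T -> g k t = 0 -> (forall l, 0 <= g l t) -> 0 < dg k t) ->
  forall k t, t0 <= t <= T -> 0 < g k t.
Proof.
move=> g0 g_right g_der dg_pos j t /andP[t0t tT]; rewrite ltNge; apply/negP => gjt.
have g_cont k s (t0s : t0 < s) := is_derive_cvg (g_der k s t0s).
have [s [k [/andP[t0s st] gks gs_ge0 before]]] := first_exit_time g0 g_right g_cont t0t gjt.
have sT : t0 < s <= T by rewrite t0s (le_trans st tT).
have [e e0 g_left] := is_derive_gt0_left (g_der k s t0s) (dg_pos k s sT gks gs_ge0).
have [x [x1 x2 x3]] := exists_left_point t0s e0.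
have := before k x; have := g_left x; rewrite gks; lra.
Qed.

Lemma is_derive_exp_growth (R : realType) (c M t0 x : R) :
  is_derive x 1 (fun y => c * expR (M * (y - t0))) (M * (c * expR (M * (x - t0)))).
Proof.
have lin : is_derive x 1 (fun y => M * (y - t0)) M.
  have := is_deriveZ M (is_deriveB (is_derive_id x 1) (is_derive_cst t0 x 1)).
  by rewrite subr0 /GRing.scale /= mulr1.
apply: is_derive_eq (is_deriveZ c (is_derive1_comp (is_derive_expR _) lin)) _.
by rewrite /GRing.scale /=; lra.
Qed.

Lemma nonneg_invariant (R : realType) (I : finType) (u du : I -> R -> R) (t0 L : R) :
  0 <= L ->
  (forall k, 0 <= u k t0) ->
  (forall k, u k x @[x --> t0^'+] --> u k t0) ->
  (forall k t, t0 < t -> is_derive t 1 (u k) (du k t)) ->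
  (forall k t e, t0 < t -> 0 < e <= 1 -> u k t = - e ->
     (forall l, - e <= u l t) -> - (L * e) <= du k t) ->
  forall k t, t0 <= t -> 0 <= u k t.
Proof.
move=> L0 u0 u_right u_der du_ge j t t0t; rewrite leNgt; apply/negP => ujt.
pose c := Num.min 1 (- u j t) / 2.
have c0 : 0 < c by rewrite divr_gt0 // lt_min ltr01 /=; lra.
have c1 : c <= 1 / 2 by rewrite ler_pM2r // ge_min lexx.
have c_lt : c < - u j t.
  have : Num.min 1 (- u j t) <= - u j t by rewrite ge_min lexx orbT.
  rewrite /c; lra.
pose w x := c / expR ((L + 1) * (t - t0)) * expR ((L + 1) * (x - t0)).
have w_gt0 x : 0 < w x by apply: mulr_gt0; [apply: divr_gt0 |]; rewrite ?expR_gt0.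
have wt : w t = c by rewrite /w divfK // gt_eqF ?expR_gt0.
have w_le x : x <= t -> w x <= c.
  move=> xt; rewrite -wt /w ler_pM2l; last by apply: divr_gt0; rewrite ?expR_gt0.
  by rewrite ler_expR ler_pM2l; lra.
have w_der y : is_derive y (1 : R) w ((L + 1) * w y) by apply: is_derive_exp_growth.
suff : 0 < u j t + w t by rewrite wt; lra.
have t_in : t0 <= t <= t by rewrite t0t lexx.
apply: (positivity_invariant (g := fun k x => u k x + w x)
  (dg := fun k x => du k x + (L + 1) * w x) _ _ _ _ j t_in).
- by move=> k; have := u0 k; have := w_gt0 t0; lra.
- move=> k; apply: cvgD; first exact: u_right.
  by apply: cvg_at_right_filter; exact: is_derive_cvg (w_der t0).
- by move=> k x t0x; exact: is_deriveD (u_der k x t0x) (w_der x).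
move=> k x /andP[t0x xt] ukx u_ge.
have w_in : 0 < w x <= 1 by rewrite w_gt0 /=; have := w_le x xt; lra.
have ukx' : u k x = - w x by lra.
have u_ge' l : - w x <= u l x by have := u_ge l; lra.
have := du_ge k x (w x) t0x w_in ukx' u_ge'; have := w_gt0 x; lra.
Qed.

Lemma mul_ge_perturbed (R : realFieldType) (K e x y : R) :
  0 <= K -> 0 <= e <= 1 -> - e <= x <= 3 -> - (K * e) <= y <= 3 * K ->
  - (7 * K * e) <= x * y.
Proof.
move=> K0 /andP[e0 e1] /andP[x1 x2] /andP[y1 y2].
have h1 : 0 <= (x + e) * (y + K * e) by apply: mulr_ge0; lra.
have h2 : 0 <= (3 - x) * (K * e) by apply: mulr_ge0; [lra | apply: mulr_ge0].
have h3 : 0 <= e * (3 * K - y) by apply: mulr_ge0; lra.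
have h4 : 0 <= K * e * (1 - e) by apply: mulr_ge0; [apply: mulr_ge0 | lra].
lra.
Qed.

Section Pressure.
Variables (R : realType) (N : nat) (A : 'M[R]_N).
Hypothesis A01 : forall i j, 0 <= A i j <= 1.

Lemma pressure_ge (p : 'I_N -> R -> R) i t (a : R) :
  a <= 0 -> (forall j, a <= p j t) -> N%:R * a <= pressure A p i t.
Proof.
move=> a_le0 p_ge.
have -> : N%:R * a = \sum_(j < N) a by rewrite sumr_const card_ord mulr_natl.
apply: ler_sum => j _; have /andP[A0 A1] := A01 i j; have := p_ge j; nra.
Qed.

Lemma pressure_le (p : 'I_N -> R -> R) i t (b : R) :
  0 <= b -> (forall j, p j t <= b) -> pressure A p i t <= N%:R * b.
Proof.
move=> b_ge0 p_le.
have -> : N%:R * b = \sum_(j < N) b by rewrite sumr_const card_ord mulr_natl.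
apply: ler_sum => j _; have /andP[A0 A1] := A01 i j; have := p_le j; nra.
Qed.

End Pressure.

Lemma pressureB (R : realType) (N : nat) (A : 'M[R]_N) (f g : 'I_N -> R -> R) i t :
  pressure A f i t - pressure A g i t = pressure A (fun j x => f j x - g j x) i t.
Proof. by rewrite /pressure -sumrB; apply: eq_bigr => j _; rewrite mulrBr. Qed.

Section SaisSis.
Variables (R : realType) (N : nat) (A : 'M[R]_N).
Variables (beta0 betaa delta kappa t0 : R) (p q p' : 'I_N -> R -> R).
Hypothesis A01 : forall i j, 0 <= A i j <= 1.
Hypotheses (beta0_ge0 : 0 <= beta0) (betaa_ge0 : 0 <= betaa)
  (betaa_le_beta0 : betaa <= beta0) (delta_ge0 : 0 <= delta) (kappa_ge0 : 0 <= kappa).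

Local Notation K := (N%:R : R).

Section SaisBounds.
Variables (x e : R).
Hypotheses (e_in : 0 <= e <= 1) (p_ge : forall k, - e <= p k x)
  (q_ge : forall k, - e <= q k x) (s_ge : forall k, - e <= 1 - p k x - q k x).

Let S_ge j : - (K * e) <= pressure A p j x.
Proof. by rewrite -mulrN; apply: pressure_ge => //; case/andP: e_in => *; lra. Qed.

Let S_le j : pressure A p j x <= 3 * K.
Proof.
rewrite mulrC; apply: pressure_le => // k.
by have := q_ge k; have := s_ge k; case/andP: e_in => *; lra.
Qed.

Lemma sais_p_rhs_ge j : p j x = - e ->
  - (7 * K * (beta0 + betaa) * e) <= sais_p_rhs A beta0 betaa delta p q j x.
Proof.
move=> pj; have /andP[e0 e1] := e_in.
have S_in : - (K * e) <= pressure A p j x <= 3 * K by rewrite S_ge S_le.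
have s_in : - e <= 1 - p j x - q j x <= 3 by rewrite s_ge /=; have := q_ge j; lra.
have q_in : - e <= q j x <= 3 by rewrite q_ge /=; have := s_ge j; lra.
have := ler_wpM2l beta0_ge0 (mul_ge_perturbed (ler0n _ N) e_in s_in S_in).
have := ler_wpM2l betaa_ge0 (mul_ge_perturbed (ler0n _ N) e_in q_in S_in).
have : 0 <= delta * e by apply: mulr_ge0.
rewrite /sais_p_rhs pj; lra.
Qed.

Lemma sais_q_rhs_ge j : q j x = - e ->
  - ((7 * K * kappa + K * betaa) * e) <= sais_q_rhs A betaa kappa p q j x.
Proof.
move=> qj; have /andP[e0 e1] := e_in.
have S_in : - (K * e) <= pressure A p j x <= 3 * K by rewrite S_ge S_le.
have s_in : - e <= 1 - p j x - q j x <= 3 by rewrite s_ge /=; have := p_ge j; lra.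
have := ler_wpM2l kappa_ge0 (mul_ge_perturbed (ler0n _ N) e_in s_in S_in).
have SKe : 0 <= pressure A p j x + K * e by have := S_ge j; lra.
have : 0 <= betaa * e * (pressure A p j x + K * e) by rewrite !mulr_ge0.
have : 0 <= betaa * K * e * (1 - e) by rewrite !mulr_ge0 ?ler0n ?subr_ge0.
rewrite /sais_q_rhs qj; lra.
Qed.

Lemma sais_s_rhs_ge j : 1 - p j x - q j x = - e ->
  - ((K * (beta0 + kappa) + delta) * e) <=
  - sais_p_rhs A beta0 betaa delta p q j x - sais_q_rhs A betaa kappa p q j x.
Proof.
move=> sj; have /andP[e0 e1] := e_in.
have bk0 : 0 <= beta0 + kappa by apply: addr_ge0.
have SKe : 0 <= pressure A p j x + K * e by have := S_ge j; lra.
have : 0 <= (beta0 + kappa) * e * (pressure A p j x + K * e) by rewrite !mulr_ge0.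
have : 0 <= (beta0 + kappa) * K * e * (1 - e) by rewrite !mulr_ge0 ?ler0n ?subr_ge0.
have pe : 0 <= p j x + e by have := p_ge j; lra.
have : 0 <= delta * (p j x + e) by rewrite mulr_ge0.
rewrite /sais_p_rhs /sais_q_rhs sj; lra.
Qed.

End SaisBounds.

Section SisBounds.
Variables (x e : R).
Hypotheses (e_in : 0 <= e <= 1) (p'_ge : forall k, - e <= p' k x).

Let S'Ke j : 0 <= pressure A p' j x + K * e.
Proof.
suff : - (K * e) <= pressure A p' j x by lra.
by rewrite -mulrN; apply: pressure_ge => //; case/andP: e_in => *; lra.
Qed.

Lemma sis_rhs_ge j : p' j x = - e -> - (2 * K * beta0 * e) <= sis_rhs A beta0 delta p' j x.
Proof.
move=> pj; have /andP[e0 e1] := e_in.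
have : 0 <= beta0 * (1 + e) * (pressure A p' j x + K * e) by rewrite !mulr_ge0 ?S'Ke ?addr_ge0.
have : 0 <= beta0 * K * e * (1 - e) by rewrite !mulr_ge0 ?ler0n ?subr_ge0.
have : 0 <= delta * e by rewrite mulr_ge0.
rewrite /sis_rhs pj; lra.
Qed.

Lemma sis_rhs_le j : p' j x = 1 + e -> sis_rhs A beta0 delta p' j x <= K * beta0 * e.
Proof.
move=> pj; have /andP[e0 e1] := e_in.
have : 0 <= beta0 * e * (pressure A p' j x + K * e) by rewrite !mulr_ge0 ?S'Ke.
have : 0 <= beta0 * K * e * (1 - e) by rewrite !mulr_ge0 ?ler0n ?subr_ge0.
have : 0 <= delta * (1 + e) by rewrite mulr_ge0 ?addr_ge0.
rewrite /sis_rhs pj; lra.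
Qed.

End SisBounds.

(* The alert compartment only contributes [(beta0 - betaa) q_j S_j >= 0] here. *)
Lemma sis_sais_rhs_gap_ge j x e :
  0 <= e -> 0 <= q j x -> 0 <= pressure A p j x -> 0 <= p' j x <= 1 ->
  (forall k, - e <= p' k x - p k x) -> p' j x - p j x = - e ->
  - (K * beta0 * e) <=
  sis_rhs A beta0 delta p' j x - sais_p_rhs A beta0 betaa delta p q j x.
Proof.
move=> e0 q0 S0 /andP[p'0 p'1] diff_ge dj.
have dS : - (K * e) <= pressure A p' j x - pressure A p j x.
  by rewrite pressureB -mulrN; apply: pressure_ge => //; lra.
have dSKe : 0 <= pressure A p' j x - pressure A p j x + K * e by lra.
have : 0 <= beta0 * (1 - p' j x) * (pressure A p' j x - pressure A p j x + K * e).
  by rewrite !mulr_ge0 ?subr_ge0.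
have : 0 <= beta0 * p' j x * K * e by rewrite !mulr_ge0 ?ler0n.
have : 0 <= (beta0 - betaa) * q j x * pressure A p j x by rewrite !mulr_ge0 ?subr_ge0.
have : 0 <= beta0 * e * pressure A p j x by rewrite !mulr_ge0.
have : 0 <= delta * e by rewrite mulr_ge0.
rewrite /sis_rhs /sais_p_rhs (_ : p j x = p' j x + e); lra.
Qed.

Hypotheses (p_t0 : forall i, 0 <= p i t0) (q_t0 : forall i, 0 <= q i t0)
  (pq_t0 : forall i, p i t0 + q i t0 <= 1) (p'_t0 : forall i, p' i t0 = p i t0).
Hypotheses (p_right : forall i, p i x @[x --> t0^'+] --> p i t0)
  (q_right : forall i, q i x @[x --> t0^'+] --> q i t0)
  (p'_right : forall i, p' i x @[x --> t0^'+] --> p' i t0).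
Hypotheses
  (p_der : forall i t, t0 < t -> is_derive t 1 (p i) (sais_p_rhs A beta0 betaa delta p q i t))
  (q_der : forall i t, t0 < t -> is_derive t 1 (q i) (sais_q_rhs A betaa kappa p q i t))
  (p'_der : forall i t, t0 < t -> is_derive t 1 (p' i) (sis_rhs A beta0 delta p' i t)).

Definition sais_coord (k : 'I_N + 'I_N + 'I_N) (x : R) : R :=
  match k with
  | inl (inl j) => p j x
  | inl (inr j) => q j x
  | inr j => 1 - p j x - q j x
  end.

Definition sais_coord_rhs (k : 'I_N + 'I_N + 'I_N) (x : R) : R :=
  match k with
  | inl (inl j) => sais_p_rhs A beta0 betaa delta p q j x
  | inl (inr j) => sais_q_rhs A betaa kappa p q j x
  | inr j => - sais_p_rhs A beta0 betaa delta p q j x - sais_q_rhs A betaa kappa p q j x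
  end.

Lemma sais_coord_rhs_ge k x e :
  0 < e <= 1 -> sais_coord k x = - e -> (forall l, - e <= sais_coord l x) ->
  - ((7 * K * (beta0 + betaa + kappa) + delta) * e) <= sais_coord_rhs k x.
Proof.
move=> /andP[e_gt0 e1] ke all_ge.
have e_in : 0 <= e <= 1 by rewrite ltW.
have p_ge l : - e <= p l x := all_ge (inl (inl l)).
have q_ge l : - e <= q l x := all_ge (inl (inr l)).
have s_ge l : - e <= 1 - p l x - q l x := all_ge (inr l).
have Kb0 : 0 <= K * beta0 by rewrite mulr_ge0 ?ler0n.
have Kba : 0 <= K * betaa by rewrite mulr_ge0 ?ler0n.
have Kk : 0 <= K * kappa by rewrite mulr_ge0 ?ler0n.
have d0 := delta_ge0. (* [lra] does not use section hypotheses. *)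
suff [Lc [Lc_le rhs_ge]] :
    exists Lc, Lc <= 7 * K * (beta0 + betaa + kappa) + delta /\ - (Lc * e) <= sais_coord_rhs k x.
  by apply: le_trans rhs_ge; rewrite lerN2 ler_wpM2r // ltW.
case: k ke => [[j|j]|j] /= ke.
- by exists (7 * K * (beta0 + betaa)); split; [lra | exact: sais_p_rhs_ge].
- by exists (7 * K * kappa + K * betaa); split; [lra | exact: sais_q_rhs_ge].
- by exists (K * (beta0 + kappa) + delta); split; [lra | exact: sais_s_rhs_ge].
Qed.

Lemma sais_coord_is_derive k t : t0 < t -> is_derive t 1 (sais_coord k) (sais_coord_rhs k t).
Proof.
case: k => [[j|j]|j] t0t /=; [exact: p_der | exact: q_der |].
apply: is_derive_eq.
  exact: is_deriveB (is_deriveB (is_derive_cst (1 : R) t 1) (p_der j t0t)) (q_der j t0t).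
by rewrite sub0r.
Qed.

Lemma sais_probability j x : t0 <= x -> [/\ 0 <= p j x, 0 <= q j x & p j x + q j x <= 1].
Proof.
have L0 : 0 <= 7 * K * (beta0 + betaa + kappa) + delta.
  by rewrite addr_ge0 ?mulr_ge0 ?ler0n ?addr_ge0.
have coord_t0 k : 0 <= sais_coord k t0.
  by case: k => [[k|k]|k] /=; [exact: p_t0 | exact: q_t0 | have := pq_t0 k; lra].
have coord_right k : sais_coord k x @[x --> t0^'+] --> sais_coord k t0.
  case: k => [[k|k]|k] /=; [exact: p_right | exact: q_right |].
  by apply: cvgB; [apply: cvgB; [exact: cvg_cst | exact: p_right] | exact: q_right].
have coord_ge0 := nonneg_invariant L0 coord_t0 coord_right sais_coord_is_derive
  (fun k x e _ => @sais_coord_rhs_ge k x e).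
move=> t0x; split; [exact: (coord_ge0 (inl (inl j))) | exact: (coord_ge0 (inl (inr j))) |].
by have := coord_ge0 (inr j) x t0x; rewrite /=; lra.
Qed.

Definition sis_coord (k : 'I_N + 'I_N) (x : R) : R :=
  match k with inl j => p' j x | inr j => 1 - p' j x end.

Definition sis_coord_rhs (k : 'I_N + 'I_N) (x : R) : R :=
  match k with
  | inl j => sis_rhs A beta0 delta p' j x
  | inr j => - sis_rhs A beta0 delta p' j x
  end.

Lemma sis_coord_rhs_ge k x e :
  0 < e <= 1 -> sis_coord k x = - e -> (forall l, - e <= sis_coord l x) ->
  - (2 * K * beta0 * e) <= sis_coord_rhs k x.
Proof.
move=> /andP[e_gt0 e1] ke all_ge.
have e_in : 0 <= e <= 1 by rewrite ltW.
have p'_ge l : - e <= p' l x := all_ge (inl l).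
case: k ke => j /= ke; first exact: sis_rhs_ge.
have pj : p' j x = 1 + e by lra.
have := sis_rhs_le e_in p'_ge pj.
have : 0 <= K * beta0 * e by rewrite !mulr_ge0 ?ler0n // ltW.
lra.
Qed.

Lemma sis_coord_is_derive k t : t0 < t -> is_derive t 1 (sis_coord k) (sis_coord_rhs k t).
Proof.
case: k => j t0t /=; first exact: p'_der.
apply: is_derive_eq.
  exact: is_deriveB (is_derive_cst (1 : R) t 1) (p'_der j t0t).
by rewrite sub0r.
Qed.

Lemma sis_probability j x : t0 <= x -> 0 <= p' j x <= 1.
Proof.
have L0 : 0 <= 2 * K * beta0 by rewrite !mulr_ge0 ?ler0n.
have coord_t0 k : 0 <= sis_coord k t0.
  by case: k => k /=; rewrite p'_t0; [exact: p_t0 | have := pq_t0 k; have := q_t0 k; lra].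
have coord_right k : sis_coord k x @[x --> t0^'+] --> sis_coord k t0.
  by case: k => k /=; [exact: p'_right | apply: cvgB; [exact: cvg_cst | exact: p'_right]].
have coord_ge0 := nonneg_invariant L0 coord_t0 coord_right sis_coord_is_derive
  (fun k x e _ => @sis_coord_rhs_ge k x e).
move=> t0x; have := coord_ge0 (inl j) x t0x; have := coord_ge0 (inr j) x t0x.
rewrite /=; lra.
Qed.

Lemma sais_le_sis j x : t0 <= x -> p j x <= p' j x.
Proof.
have L0 : 0 <= K * beta0 by rewrite mulr_ge0 ?ler0n.
have gap_ge k y e : t0 < y -> 0 < e <= 1 -> p' k y - p k y = - e ->
    (forall l, - e <= p' l y - p l y) ->
    - (K * beta0 * e) <= sis_rhs A beta0 delta p' k y - sais_p_rhs A beta0 betaa delta p q k y.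
  move=> t0y /andP[e_gt0 _] dk diff_ge; have t0y' := ltW t0y.
  have [p_ge0 q_ge0 _] := sais_probability k t0y'.
  have S_ge0 : 0 <= pressure A p k y.
    by rewrite -(mulr0 K); apply: pressure_ge => // l; have [] := sais_probability l t0y'.
  exact: sis_sais_rhs_gap_ge (ltW e_gt0) q_ge0 S_ge0 (sis_probability k t0y') diff_ge dk.
move=> t0x; rewrite -subr_ge0; apply: (@nonneg_invariant R _ (fun k y => p' k y - p k y)
  (fun k y => sis_rhs A beta0 delta p' k y - sais_p_rhs A beta0 betaa delta p q k y) t0 (K * beta0)
  L0 _ _ _ gap_ge j x t0x).
- by move=> k; rewrite p'_t0 subrr.
- by move=> k; apply: cvgB; [exact: p'_right | exact: p_right].
- by move=> k y t0y; exact: is_deriveB (p'_der k t0y) (p_der k t0y).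
Qed.

End SaisSis.

Theorem theorem1 (R : realType) (N : nat) (A : 'M[R]_N)
    (beta0 betaa delta kappa t0 : R) (p q p' : 'I_N -> R -> R) :
  (forall i j, A i j = 0 \/ A i j = 1) ->
  (forall i, A i i = 0) ->
  0 < beta0 -> 0 < delta -> 0 < kappa -> 0 <= betaa -> betaa < beta0 ->
  (forall i, 0 <= p i t0) -> (forall i, 0 <= q i t0) ->
  (forall i, p i t0 + q i t0 <= 1) ->
  (forall i, p' i t0 = p i t0) ->
  (forall i, p i x @[x --> t0^'+] --> p i t0) ->
  (forall i, q i x @[x --> t0^'+] --> q i t0) ->
  (forall i, p' i x @[x --> t0^'+] --> p' i t0) ->
  (forall i t, t0 < t ->
     is_derive t 1 (p i) (sais_p_rhs A beta0 betaa delta p q i t)) ->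
  (forall i t, t0 < t ->
     is_derive t 1 (q i) (sais_q_rhs A betaa kappa p q i t)) ->
  (forall i t, t0 < t ->
     is_derive t 1 (p' i) (sis_rhs A beta0 delta p' i t)) ->
  forall i t, t0 <= t -> p i t <= p' i t.
Proof.
move=> A01 _ beta0_gt0 delta_gt0 kappa_gt0 betaa_ge0 betaa_lt_beta0.
have A_in i j : 0 <= A i j <= 1 by case: (A01 i j) => ->; rewrite ?lexx ?ler01.
exact: (sais_le_sis A_in (ltW beta0_gt0) betaa_ge0 (ltW betaa_lt_beta0) (ltW delta_gt0)
  (ltW kappa_gt0)).
Qed.
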